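(* Let $R$ be a principal ideal domain, let $P$ be a lattice with a compatible abelian group structure, and let $O\subseteq P$. Assume there exists $a\in O$ such that no element of $V_a\cap O$ is a minimal element of $O$, where $V_a=\{x\in P: x\le a\}$. Let $M=\bigoplus_{i\in P}M_i$ be a $P$-graded $R[U_0]$-module such that $M_i$ is a nonzero free $R$-module of finite rank for $i\in O$ and $M_i=0$ for $i\notin O$. Then $M$ is not graded projective.
   Context: A lattice is a poset in which any two elements have a join and a meet; a compatible abelian group structure means $(P,+,0)$ is an abelian group with $a\le b\Rightarrow a+c\le b+c$. $U_0=\{s\in P: s\ge 0\}$ and $R[U_0]$ is the monoid ring of finite sums $\sum_{s\in U_0}c_st^s$ ($c_s\in R$), graded by $\deg(ct^s)=s$; a $P$-graded $R[U_0]$-module is the same as a persistence module over $R$ indexed by $P$. A minimal element of $O$ is $m\in O$ such that no $s\in O$ satisfies $s<m$. Graded projective means a graded direct summand of a graded free $R[U_0]$-module. *)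

From HB Require Import structures.
From mathcomp Require Import all_boot all_order ssralg.
Set Implicit Arguments. Unset Strict Implicit. Unset Printing Implicit Defensive.
Import Order.TTheory GRing.Theory.
Local Open Scope ring_scope.

(* A lattice carrying an abelian group structure (the compatibility
   axiom a <= b -> a + c <= b + c is a separate hypothesis). *)
#[short(type="latticeZmodType")]
HB.structure Definition LatticeZmod (d : Order.disp_t) :=
  { T of Order.Lattice d T & GRing.Zmodule T }.

Definition order_compatible d (P : latticeZmodType d) : Prop :=
  forall a b c : P, (a <= b)%O -> (a + c <= b + c)%O.

Definition is_ideal (R : comPzRingType) (I : R -> Prop) : Prop :=
  [/\ I 0, (forall x y, I x -> I y -> I (x + y)) & (forall r x, I x -> I (r * x))].

Definition is_principal (R : comPzRingType) (I : R -> Prop) : Prop :=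
  exists a : R, forall x, I x <-> exists r : R, x = r * a.

Definition PID (R : idomainType) : Prop :=
  forall I : R -> Prop, is_ideal I -> is_principal I.

Definition minimal_in d (P : porderType d) (O : P -> Prop) (m : P) : Prop :=
  O m /\ ~ (exists s, O s /\ (s < m)%O).

Definition lin (R : pzRingType) (U V : lmodType R) (f : U -> V) : Prop :=
  forall (a : R) (x y : U), f (a *: x + y) = a *: f x + f y.

(* A P-graded R[U_0]-module, presented as a persistence module over R
   indexed by P: M_i for i in P, and the action of t^(j-i) : M_i -> M_j
   for i <= j (functorial). *)
Record pmod d (P : porderType d) (R : pzRingType) := PMod {
  pobj : P -> lmodType R;
  pmap : forall i j : P, (i <= j)%O -> pobj i -> pobj j;
  pmap_lin : forall i j (h : (i <= j)%O), lin (pmap h);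
  pmap_id : forall i (h : (i <= i)%O) x, pmap h x = x;
  pmap_comp : forall i j k (hij : (i <= j)%O) (hjk : (j <= k)%O) (hik : (i <= k)%O) x,
      pmap hik x = pmap hjk (pmap hij x)
}.
Arguments pmap {d P R} p {i j} _ _.

Definition pext d (P : porderType d) (R : pzRingType) (M : pmod P R) (i j : P)
    (x : pobj M i) : pobj M j :=
  (if (i <= j)%O as b return ((i <= j)%O = b -> pobj M j)
   then fun h => pmap M h x else fun _ => 0) (erefl _).
Arguments pext {d P R} M {i} j x.

Definition pmor d (P : porderType d) (R : pzRingType) (M N : pmod P R) :=
  forall i, pobj M i -> pobj N i.

Definition is_pmor d (P : porderType d) (R : pzRingType) (M N : pmod P R)
    (f : pmor M N) : Prop :=
  (forall i, lin (f i)) /\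
  (forall i j (h : (i <= j)%O) (x : pobj M i), f j (pmap M h x) = pmap N h (f i x)).

(* Graded free R[U_0]-module: free with a homogeneous basis (b_g)_{g in G},
   deg b_g = deg g.  In degree j this says exactly that the elements
   t^(j - deg g) b_g, for deg g <= j, form an R-basis of M_j. *)
Definition graded_free d (P : porderType d) (R : pzRingType) (F : pmod P R) : Prop :=
  exists (G : eqType) (deg : G -> P) (b : forall g : G, pobj F (deg g)),
  forall j : P,
    (forall x : pobj F j, exists (s : seq G) (c : G -> R),
        all (fun g => (deg g <= j)%O) s /\
        x = \sum_(g <- s) c g *: pext F j (b g)) /\
    (forall (s : seq G) (c : G -> R), uniq s -> all (fun g => (deg g <= j)%O) s ->
        \sum_(g <- s) c g *: pext F j (b g) = 0 -> forall g, g \in s -> c g = 0).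

(* M is a graded direct summand of a graded free module: F = M (+) N as
   graded modules, expressed by the biproduct equations. *)
Definition graded_projective d (P : porderType d) (R : pzRingType) (M : pmod P R) : Prop :=
  exists (F N : pmod P R) (iM : pmor M F) (iN : pmor N F) (pM : pmor F M) (pN : pmor F N),
    [/\ graded_free F, is_pmor iM, is_pmor iN, is_pmor pM & is_pmor pN] /\
    [/\ forall i x, pM i (iM i x) = x,
        forall i x, pN i (iN i x) = x,
        forall i x, pM i (iN i x) = 0,
        forall i x, pN i (iM i x) = 0 &
        forall i x, iM i (pM i x) + iN i (pN i x) = x].

Definition nonzero_free_finite_rank (R : pzRingType) (V : lmodType R) : Prop :=
  exists n : nat, (0 < n)%N /\ exists b : 'I_n -> V,
    forall x : V, exists! c : {ffun 'I_n -> R}, x = \sum_(k < n) c k *: b k.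

(* Suppose M is a direct summand of a graded free module F with homogeneous
   basis (b_g), via iM : M -> F and pM : F -> M.  As M_a is finitely generated,
   iM (M_a) lies in the span of finitely many t^(a - deg g) b_g, say for g in W.
   For s <= a and 0 <> y in M_s, expand iM y in the basis of F_s; pushing to
   degree a and comparing coefficients shows that only g in W contribute, so
   y = pM (iM y) forces some g in W with deg g <= s and pM b_g <> 0.  Among the
   finitely many such g pick one of minimal degree m; then M_m <> 0, so m is in
   O, m <= a, hence m is not minimal in O, and an s in O below m yields a g of
   even smaller degree. *)
From Pilot Require Import Defs.
From HB Require Import structures.
From mathcomp Require Import all_boot all_order ssralg.
From Stdlib Require Import Classical.
Set Implicit Arguments. Unset Strict Implicit. Unset Printing Implicit Defensive.
Import Order.TTheory GRing.Theory.
Local Open Scope ring_scope.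
(* [seq.pmap] would otherwise shadow the persistence maps. *)
Local Notation pmap := Defs.pmap.

Section LinearMaps.
Variables (R : pzRingType) (U V : lmodType R) (f : U -> V).
Hypothesis f_lin : lin f.

Lemma lin0 : f 0 = 0.
Proof.
have := f_lin 1 0 0; rewrite !scale1r addr0 => /(congr1 (fun z => z - f 0)).
by rewrite subrr addrK.
Qed.

Lemma linD x y : f (x + y) = f x + f y.
Proof. by have := f_lin 1 x y; rewrite !scale1r. Qed.

Lemma linZ a x : f (a *: x) = a *: f x.
Proof. by have := f_lin a x 0; rewrite !addr0 lin0 addr0. Qed.

Lemma lin_sum (I : Type) (r : seq I) (F : I -> U) :
  f (\sum_(i <- r) F i) = \sum_(i <- r) f (F i).
Proof.
elim: r => [|i r IH]; first by rewrite !big_nil lin0.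
by rewrite !big_cons linD IH.
Qed.

End LinearMaps.

Section Extension.
Variables (d : Order.disp_t) (P : porderType d) (R : pzRingType) (M : pmod P R).

Lemma pextE i j (h : (i <= j)%O) (x : pobj M i) : pext M j x = pmap M h x.
Proof.
rewrite /pext; move: (erefl (i <= j)%O).
suff E : forall b (e : (i <= j)%O = b),
    (if b as b0 return ((i <= j)%O = b0 -> pobj M j)
     then fun h => pmap M h x else fun _ => 0) e = pmap M h x by exact: E.
by case=> e; [rewrite (bool_irrelevance e h) | rewrite h in e].
Qed.

Lemma pmap_pext i j k (hij : (i <= j)%O) (hjk : (j <= k)%O) (x : pobj M i) :
  pmap M hjk (pext M j x) = pext M k x.
Proof.
by rewrite (pextE hij) (pextE (le_trans hij hjk)) (pmap_comp hij hjk).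
Qed.

End Extension.

Section Combinations.
Variables (R : pzRingType) (V : lmodType R) (G : eqType).
Implicit Types (s t W : seq G) (c : G -> R) (v : G -> V).

Lemma sum_count_mem W s (F : G -> V) : uniq W -> {subset s <= W} ->
  \sum_(x <- s) F x = \sum_(g <- W) F g *+ count_mem g s.
Proof.
move=> uW; elim: s => [|x s IH] sW /=.
  by rewrite big_nil big1 // => g _; rewrite mulr0n.
have xW : x \in W by apply: sW; rewrite inE eqxx.
rewrite big_cons IH => [|g gs]; last by apply: sW; rewrite inE gs orbT.
under [RHS]eq_bigr do rewrite mulrnDr.
rewrite big_split /=; congr (_ + _).
rewrite (bigD1_seq x) //= eqxx mulr1n big1 ?addr0 // => g gx.
by rewrite eq_sym (negbTE gx).
Qed.

Definition in_span v W (x : V) := exists c, x = \sum_(g <- W) c g *: v g.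

Lemma in_span_comb v W s c : uniq W -> {subset s <= W} ->
  in_span v W (\sum_(g <- s) c g *: v g).
Proof.
move=> uW sW; exists (fun g => c g *+ count_mem g s).
by rewrite (sum_count_mem _ uW sW); under eq_bigr do rewrite scalerMnl.
Qed.

Lemma in_span_lincomb v W (I : Type) (r : seq I) (a : I -> R) (x : I -> V) :
  (forall i, in_span v W (x i)) -> in_span v W (\sum_(i <- r) a i *: x i).
Proof.
move=> hx; elim: r => [|i r [c IH]].
  by exists (fun=> 0); rewrite !big_nil big1 // => g _; rewrite scale0r.
have [ci xi] := hx i; exists (fun g => a i * ci g + c g).
rewrite big_cons IH xi scaler_sumr -big_split /=; apply: eq_bigr => g _.
by rewrite scalerA scalerDl.
Qed.

Definition independent_on (Q : pred G) v :=
  forall s c, uniq s -> all Q s ->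
    \sum_(g <- s) c g *: v g = 0 -> forall g, g \in s -> c g = 0.

Lemma independent_coef_count (Q : pred G) v s t c c' :
  independent_on Q v -> all Q s -> all Q t ->
  \sum_(g <- s) c g *: v g = \sum_(g <- t) c' g *: v g ->
  forall g, c g *+ count_mem g s = c' g *+ count_mem g t.
Proof.
move=> indep Qs Qt eq_st g.
pose W := undup (s ++ t).
have uW : uniq W := undup_uniq _.
have sW : {subset s <= W} by move=> x xs; rewrite mem_undup mem_cat xs.
have tW : {subset t <= W} by move=> x xt; rewrite mem_undup mem_cat xt orbT.
have [gW | gNW] := boolP (g \in W); last first.
  move: gNW; rewrite mem_undup mem_cat negb_or => /andP[gNs gNt].
  by rewrite (count_memPn gNs) (count_memPn gNt) !mulr0n.
apply/eqP; rewrite -subr_eq0; apply/eqP; move: g gW.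
apply: (indep W (fun g => c g *+ count_mem g s - c' g *+ count_mem g t)) => //.
  apply/allP => x; rewrite mem_undup mem_cat => /orP[].
    exact: (allP Qs).
  exact: (allP Qt).
under eq_bigr do rewrite scalerBl -!scalerMnl.
by rewrite sumrB -!sum_count_mem // eq_st subrr.
Qed.

End Combinations.

Lemma seq_has_minimal d (P : porderType d) (G : eqType) (f : G -> P) (T : seq G) :
  T != [::] -> exists2 m, m \in T & forall g, g \in T -> ~~ (f g < f m)%O.
Proof.
elim: T => // x [|y T] IH _.
  by exists x => [|g]; rewrite !inE // => /eqP ->; rewrite ltxx.
have [m mT m_min] := IH isT.
have [xm | xNm] := boolP (f x < f m)%O.
  exists x => [|g]; first by rewrite inE eqxx.
  rewrite inE => /predU1P[-> | gT]; first by rewrite ltxx.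
  by apply: contra (m_min g gT) => gx; apply: lt_trans gx xm.
exists m => [|g]; first by rewrite inE mT orbT.
by rewrite inE => /predU1P[-> | gT] //; apply: m_min.
Qed.

Section GradedRetract.
Variables (d : Order.disp_t) (P : porderType d) (R : pzRingType) (M F : pmod P R).
Variables (G : eqType) (deg : G -> P) (b : forall g : G, pobj F (deg g)).
Local Notation gen j := (fun g => pext F j (b g)).
Local Notation below j := (fun g => (deg g <= j)%O).
Hypothesis gen_span : forall j (x : pobj F j), exists s c,
  all (below j) s /\ x = \sum_(g <- s) c g *: pext F j (b g).
Hypothesis gen_indep : forall j, independent_on (below j) (gen j).
Variables (iM : pmor M F) (pM : pmor F M).
Hypotheses (iM_mor : is_pmor iM) (pM_mor : is_pmor pM).
Hypothesis pMK : forall i (x : pobj M i), pM (iM x) = x.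

Lemma iM_pmap_expansion s a (hsa : (s <= a)%O) (y : pobj M s) t c : all (below s) t ->
  iM y = \sum_(g <- t) c g *: pext F s (b g) ->
  iM (pmap M hsa y) = \sum_(g <- t) c g *: pext F a (b g).
Proof.
move=> ts yt; rewrite iM_mor.2 yt (lin_sum (pmap_lin hsa)).
apply: eq_big_seq => g gt.
by rewrite (linZ (pmap_lin hsa)) (pmap_pext (allP ts g gt)).
Qed.

Lemma pM_expansion s (y : pobj M s) t c : all (below s) t ->
  iM y = \sum_(g <- t) c g *: pext F s (b g) ->
  y = \sum_(g <- t) c g *: pext M s (pM (b g)).
Proof.
move=> ts yt; rewrite -[y]pMK yt (lin_sum (pM_mor.1 s)).
apply: eq_big_seq => g gt; have gs := allP ts g gt.
by rewrite (linZ (pM_mor.1 s)) !(pextE gs) pM_mor.2.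
Qed.

Lemma iM_finite_span a n (e : 'I_n -> pobj M a) :
  (forall x, exists c : 'I_n -> R, x = \sum_(k < n) c k *: e k) ->
  exists W, [/\ uniq W, all (below a) W &
    forall x : pobj M a, in_span (gen a) W (iM x)].
Proof.
move=> e_span.
have /fin_all_exists [sc e_exp] k : exists sc : seq G * (G -> R),
    all (below a) sc.1 /\ iM (e k) = \sum_(g <- sc.1) sc.2 g *: pext F a (b g).
  by have [t [c ?]] := gen_span (iM (e k)); exists (t, c).
pose W := undup (flatten [seq (sc k).1 | k <- enum 'I_n]).
have scW k : {subset (sc k).1 <= W}.
  move=> g gk; rewrite mem_undup; apply/flattenP.
  by exists (sc k).1; rewrite ?map_f ?mem_enum.
exists W; split; first exact: undup_uniq.
  apply/allP => g; rewrite mem_undup => /flattenP[_ /mapP[k _ ->] gk].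
  exact: (allP (e_exp k).1).
move=> x; have [c ->] := e_span x; rewrite (lin_sum (iM_mor.1 a)).
under eq_bigr do rewrite (linZ (iM_mor.1 a)).
apply: in_span_lincomb => k; rewrite (e_exp k).2.
exact: in_span_comb (undup_uniq _) (scW k).
Qed.

Lemma nonzero_has_generator a W : uniq W -> all (below a) W ->
  (forall x : pobj M a, in_span (gen a) W (iM x)) ->
  forall s (hsa : (s <= a)%O) (y : pobj M s), y != 0 ->
  exists2 g, g \in W & (deg g <= s)%O && (pM (b g) != 0).
Proof.
move=> uW Wa Wspan s hsa y y0.
have [t [c [ts yt]]] := gen_span (iM y).
have [C yW] := Wspan (pmap M hsa y).
have ta : all (below a) t by apply/allP => g /(allP ts) /le_trans; apply.
have coef g : c g *+ count_mem g t = C g *+ count_mem g W.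
  apply: (independent_coef_count (@gen_indep a) ta Wa).
  by rewrite -(iM_pmap_expansion hsa ts yt).
apply/hasP; apply: contraNT y0 => /hasPn noW; apply/eqP.
rewrite (pM_expansion ts yt) (sum_count_mem _ (undup_uniq t)) => [|g]; last first.
  by rewrite mem_undup.
rewrite big1_seq // => g /andP[_]; rewrite mem_undup => gt; have gs := allP ts g gt.
rewrite scalerMnl coef; have [gW | gNW] := boolP (g \in W); last first.
  by rewrite (count_memPn gNW) mulr0n scale0r.
have := noW g gW; rewrite /= gs negbK => /eqP ->.
by rewrite (pextE gs) (lin0 (pmap_lin gs)) scaler0.
Qed.

End GradedRetract.

Lemma nonzero_free_exists_neq0 (R : nzRingType) (V : lmodType R) :
  nonzero_free_finite_rank V -> exists x : V, x != 0.
Proof.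
case=> n [n_gt0 [e e_basis]]; pose k0 := Ordinal n_gt0.
exists (e k0); apply/eqP => e0.
have [c [_ c_uniq]] := e_basis 0.
have c0 : c = [ffun=> 0] by apply: c_uniq; rewrite big1 // => k _; rewrite ffunE scale0r.
have c1 : c = [ffun k => (k == k0)%:R].
  apply: c_uniq; rewrite (bigD1 k0) //= ffunE eqxx scale1r e0 big1 ?addr0 // => k kk0.
  by rewrite ffunE (negbTE kk0) scale0r.
have := congr1 (fun f : {ffun 'I_n -> R} => f k0) (etrans (esym c0) c1).
by rewrite /= !ffunE eqxx => /eqP; rewrite eq_sym oner_eq0.
Qed.

Theorem lemma5p1 (d : Order.disp_t) (P : latticeZmodType d) (R : idomainType)
  (hR : PID R) (hP : order_compatible P) (O : P -> Prop)
  (hO : exists a : P, O a /\ forall x : P, (x <= a)%O -> O x -> ~ minimal_in O x)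
  (M : pmod P R)
  (hMO : forall i : P, O i -> nonzero_free_finite_rank (pobj M i))
  (hMnO : forall i : P, ~ O i -> forall x : pobj M i, x = 0%R) :
  ~ graded_projective M.
Proof.
case: hO => a [Oa a_nonmin].
case=> F [_ [iM [_ [pM [_ [[[G [deg [b hb]]] iM_mor _ pM_mor _] [pMK _ _ _ _]]]]]]].
have gen_span j := (hb j).1; have gen_indep j := (hb j).2.
have [n [_ [e e_basis]]] := hMO a Oa.
have e_span x : exists c : 'I_n -> R, x = \sum_(k < n) c k *: e k.
  by have [c [-> _]] := e_basis x; exists c.
have [W [uW Wa Wspan]] := iM_finite_span gen_span iM_mor e_span.
pose T := [seq g <- W | pM (deg g) (b g) != 0].
have witness s : O s -> (s <= a)%O -> exists2 g, g \in T & (deg g <= s)%O.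
  move=> Os hsa; have [y y0] := nonzero_free_exists_neq0 (hMO s Os).
  have [g gW /andP[gs pg]] :=
    nonzero_has_generator gen_span gen_indep iM_mor pM_mor pMK uW Wa Wspan hsa y0.
  by exists g; rewrite // mem_filter pg.
have [m mT m_min] : exists2 m, m \in T & forall g, g \in T -> ~~ (deg g < deg m)%O.
  apply: seq_has_minimal; have [g gT _] := witness a Oa (lexx a).
  by apply/eqP => T0; rewrite T0 in gT.
move: mT; rewrite mem_filter => /andP[pm mW]; have ma := allP Wa m mW.
have Om : O (deg m) by apply: NNPP => Om; move/eqP: pm; apply; exact: hMnO.
have [s [Os sm]] : exists s, O s /\ (s < deg m)%O.
  by apply: NNPP => no_s; exact: a_nonmin _ ma Om (conj Om no_s).
have [g gT gs] := witness s Os (le_trans (ltW sm) ma).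
by move: (m_min g gT); rewrite (le_lt_trans gs sm).
Qed.
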